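(* Let $\mathcal{C}$ be a hereditary class of finite simple graphs and let $f:\mathcal{C}\to\mathbb{R}$ be a function satisfying: (1) $f(G)\le |V(G)|$ whenever $G\in\mathcal{C}$ has no edges (i.e. $G$ is a collection of isolated vertices); and, for every $G\in\mathcal{C}$ with at least one edge, there exists a nonempty sequence of vertices $v_1,\dots,v_k$ of $G$ such that, setting $G_0=G$ and $G_i=G-v_1-v_2-\cdots-v_i$ for $0\le i\le k$: (2) $f(G_i-\operatorname{st}_{G_i}v_{i+1})+1\ge f(G)$ for all $0\le i\le k-1$; (3) $f(\overline{G_k})+|\operatorname{is}(G_k)|\ge f(G)$. Then for every graph $G\in\mathcal{C}$, \[\operatorname{pd}(G)\le |V(G)|-f(G).\]
   Context: All graphs are finite and simple. A class $\mathcal{C}$ of graphs is hereditary if $G-x\in\mathcal{C}$ whenever $G\in\mathcal{C}$ and $x$ is a vertex of $G$ (here $G-x$ is the induced subgraph on $V(G)\setminus\{x\}$). For a graph $H$ and a vertex $v$, $\operatorname{st}_H v$ is the induced subgraph of $H$ on $v$ together with its neighbors in $H$, and $H-\operatorname{st}_H v$ denotes $H$ with these vertices deleted. $\operatorname{is}(H)$ is the set of isolated vertices of $H$ and $\overline{H}=H-\operatorname{is}(H)$. For a graph $G$ with vertex set $\{x_1,\dots,x_n\}$ and a fixed field $\mathbf{k}$, let $S=\mathbf{k}[x_1,\dots,x_n]$ and let $I(G)=(x_ix_j : (x_i,x_j)\text{ an edge of }G)$ be the edge ideal; $\operatorname{pd}(G)$ denotes the projective dimension of $S/I(G)$ over $S$.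 *)

From Stdlib Require Import Reals.
From mathcomp Require Import all_boot all_order all_algebra.
From mathcomp Require Import finmap mpoly.

Set Implicit Arguments.
Unset Strict Implicit.
Unset Printing Implicit Defensive.

Import GRing.Theory.
Local Open Scope fset_scope.

Definition wf_graph (V : {fset nat}) (E : {fset {fset nat}}) : bool :=
  all (fun e : {fset nat} => (#|` e| == 2) && (e `<=` V)) (enum_fset E).

Record graph := Graph {
  gV : {fset nat};
  gE : {fset {fset nat}};
  gwf : wf_graph gV gE }.

Definition adj (G : graph) (u v : nat) : bool := [fset u; v] \in gE G.

Lemma induced_wf (G : graph) (A : {fset nat}) :
  wf_graph (gV G `&` A) [fset e in gE G | e `<=` A].
Proof.
apply/allP => e; rewrite !inE => /andP[eE eA].
have /allP/(_ e) := gwf G; move=> /(_ eE) /andP[-> eV] /=.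
by rewrite fsubsetI eV eA.
Qed.

Definition induced (G : graph) (A : {fset nat}) : graph :=
  Graph (induced_wf G A).

Definition delv (G : graph) (x : nat) : graph := induced G (gV G `\ x).

Definition delseq (G : graph) (vs : seq nat) : graph := foldl delv G vs.

Definition stset (G : graph) (v : nat) : {fset nat} :=
  v |` [fset u in gV G | adj G u v].

Definition delst (G : graph) (v : nat) : graph :=
  induced G (gV G `\` stset G v).

Definition isol (G : graph) : {fset nat} :=
  [fset v in gV G | ~~ has (fun e : {fset nat} => v \in e) (enum_fset (gE G))].

(* \overline{G} = G - is(G) *)
Definition ovl (G : graph) : graph := induced G (gV G `\` isol G).

Definition hereditary (C : graph -> Prop) : Prop :=
  forall (G : graph) (x : nat), C G -> x \in gV G -> C (delv G x).

(* S = k[x_v : v in V(G)], with n = |V(G)| variables; the vertex v gets the   *)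
(* variable 'X_i where i is the position of v in the enumeration of V(G).    *)

Section EdgeIdeal.
Variable k : fieldType.

Definition var (n : nat) (i : nat) : {mpoly k[n]} :=
  if insub i is Some j then 'X_j else 0.

Definition nvars (G : graph) : nat := size (enum_fset (gV G)).

Definition polyring (G : graph) := {mpoly k[nvars G]}.

Definition xv (G : graph) (v : nat) : {mpoly k[nvars G]} :=
  var (nvars G) (index v (enum_fset (gV G))).

Definition edge_gens (G : graph) : seq {mpoly k[nvars G]} :=
  [seq (\prod_(u <- enum_fset e) xv G u)%R | e <- enum_fset (gE G)].

Definition in_ideal (S : comNzRingType) (gs : seq S) (x : S) : Prop :=
  exists c : 'I_(size gs) -> S, x = (\sum_(i < size gs) c i * gs`_i)%R.

(* A finite free resolution of length <= p of S/I, I = ideal generated by gs: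
     0 -> ... -> F_3 --d 1--> F_2 --d 0--> F_1 --d0--> F_0 = S -> S/I -> 0
   with F_{i+1} = S^(b i) (row vectors, maps acting by right multiplication),
   F_{j} = 0 for j > p. *)
Definition free_resolution (S : comNzRingType) (gs : seq S) (p : nat) : Prop :=
  exists (b : nat -> nat) (d0 : 'M[S]_(b 0, 1))
         (d : forall i : nat, 'M[S]_(b i.+1, b i)),
  [/\ (* coker d0 = S/I, i.e. im d0 = I *)
      forall y : 'rV[S]_1, in_ideal gs (y ord0 ord0) <-> exists u, (u *m d0)%R = y,
      forall u : 'rV[S]_(b 0), (u *m d0 = 0)%R <-> exists w, (w *m d 0)%R = u,
      forall (i : nat) (u : 'rV[S]_(b i.+1)),
        (u *m d i = 0)%R <-> exists w, (w *m d i.+1)%R = u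
    &
      forall i : nat, (p <= i)%N -> b i = 0%N].

Definition pd_le (G : graph) (x : R) : Prop :=
  exists p : nat, free_resolution (edge_gens G) p /\ Rle (INR p) x.

End EdgeIdeal.

From Stdlib Require Import Reals.
From mathcomp Require Import all_boot all_order all_algebra.
From mathcomp Require Import finmap mpoly.
From Stdlib Require Import ClassicalEpsilon Lra.
From mathcomp Require Import zify.

(* Removing a vertex v splits the edge ideal as
   I(H) = I(H - v) + x_v (I(H - st v) + (x_u : u in N(v))), with x_v regular modulo I(H - v),
   so a mapping cone gives pd(H) <= max(pd(H - v) + 1, pd(H - st v) + |N(v)|), each fresh
   variable x_u adding one to the length.  Applied along G_0, ..., G_(k-1) and closed by
   I(G_k) = I(overline G_k), this turns (2) and (3), by strong induction on |V(G)|, into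
   pd(G) <= |V(G)| - f(G); hypothesis (1) covers the edgeless graphs. *)

Set Implicit Arguments.
Unset Strict Implicit.
Unset Printing Implicit Defensive.

Import GRing.Theory.
Local Open Scope ring_scope.

Section Ideals.
Variable S : comNzRingType.
Implicit Types (gs hs : seq S) (x y : S).

Lemma in_ideal0 gs : in_ideal gs 0.
Proof. by exists (fun _ => 0); rewrite big1 // => i _; rewrite mul0r. Qed.

Lemma in_idealD gs x y : in_ideal gs x -> in_ideal gs y -> in_ideal gs (x + y).
Proof.
case=> c1 ->; case=> c2 ->; exists (fun i => c1 i + c2 i).
by rewrite -big_split /=; apply: eq_bigr => i _; rewrite mulrDl.
Qed.

Lemma in_idealMl gs a x : in_ideal gs x -> in_ideal gs (a * x).
Proof.
case=> c ->; exists (fun i => a * c i).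
by rewrite mulr_sumr; apply: eq_bigr => i _; rewrite mulrA.
Qed.

Lemma in_idealMr gs a x : in_ideal gs x -> in_ideal gs (x * a).
Proof. by rewrite mulrC; apply: in_idealMl. Qed.

Lemma in_ideal_ind gs (K : S -> Prop) :
  K 0 -> (forall a b, K a -> K b -> K (a + b)) -> (forall c a, K a -> K (c * a)) ->
  (forall g, g \in gs -> K g) -> forall y, in_ideal gs y -> K y.
Proof.
move=> K0 KD KM Kg y [c ->]; elim/big_ind: _ => // i _.
by apply: KM; apply: Kg; apply: mem_nth.
Qed.

Lemma in_ideal_mem gs g : g \in gs -> in_ideal gs g.
Proof.
move=> hg; have hj : (index g gs < size gs)%N by rewrite index_mem.
exists (fun i => ((i : nat) == index g gs)%:R).
rewrite (bigD1 (Ordinal hj)) //= eqxx mul1r nth_index // big1 ?addr0 //.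
by move=> i /negbTE; rewrite -val_eqE /= => ->; rewrite mul0r.
Qed.

Lemma in_ideal_sum gs (I : eqType) (r : seq I) (F : I -> S) :
  (forall i, i \in r -> in_ideal gs (F i)) -> in_ideal gs (\sum_(i <- r) F i).
Proof.
move=> hF; rewrite big_seq; elim/big_ind: _ => //; first exact: in_ideal0.
exact: in_idealD.
Qed.

Lemma in_ideal_subset gs hs :
  (forall g, g \in gs -> in_ideal hs g) -> forall x, in_ideal gs x -> in_ideal hs x.
Proof. by move=> h; apply: in_ideal_ind; [apply: in_ideal0|apply: in_idealD|apply: in_idealMl|]. Qed.

Lemma in_ideal_mulr_subset gs hs x :
  (forall g, g \in hs -> in_ideal gs (x * g)) ->
  forall y, in_ideal hs y -> in_ideal gs (x * y).
Proof.
move=> h; apply: in_ideal_ind => [|a b ha hb|c a ha|//].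
- by rewrite mulr0; apply: in_ideal0.
- by rewrite mulrDr; apply: in_idealD.
- by rewrite mulrCA; apply: in_idealMl.
Qed.

Lemma in_ideal_nil x : in_ideal [::] x <-> x = 0.
Proof. by split=> [[c ->]|->]; [rewrite big_ord0 | apply: in_ideal0]. Qed.

Lemma in_ideal_rcons gs g y :
  in_ideal (rcons gs g) y <-> exists a b, in_ideal gs a /\ y = a + g * b.
Proof.
split.
  case=> c ->; move: c; rewrite size_rcons => c; rewrite big_ord_recr /=.
  exists (\sum_(i < size gs) c (widen_ord (leqnSn _) i) * (rcons gs g)`_i), (c ord_max).
  split; last by rewrite nth_rcons ltnn eqxx mulrC.
  exists (fun i => c (widen_ord (leqnSn _) i)); apply: eq_bigr => i _.
  by rewrite nth_rcons /= ltn_ord.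
case=> a [b [ha ->]]; apply: in_idealD.
  by apply: (in_ideal_subset _ ha) => h hh; apply: in_ideal_mem; rewrite mem_rcons inE hh orbT.
by apply: in_idealMr; apply: in_ideal_mem; rewrite mem_rcons mem_head.
Qed.

End Ideals.

Section MonomialIdeals.
Variables (n : nat) (R : idomainType).
Implicit Types (ms : seq 'X_{1..n}) (y : {mpoly R[n]}).

Definition mgens ms : seq {mpoly R[n]} := [seq 'X_[m] | m <- ms].

Lemma mpolyX_neq0 m : 'X_[m] != 0 :> {mpoly R[n]}.
Proof.
by apply/eqP => /(congr1 (mcoeff m)); rewrite mcoeffX eqxx mcoeff0 => /eqP; rewrite oner_eq0.
Qed.

Lemma mcoeffMX_eq0 (p : {mpoly R[n]}) m mm : ~~ (m <= mm)%MM -> (p * 'X_[m])@_mm = 0.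
Proof.
move=> hmm; apply/eqP; rewrite mcoeff_eq0 (perm_mem (msuppMX p m)).
by apply: contra hmm => /mapP [m' _ ->]; rewrite lem_addr.
Qed.

Lemma in_mgensP ms y : in_ideal (mgens ms) y <->
  (forall mm, mm \in msupp y -> exists2 m, m \in ms & (m <= mm)%MM).
Proof.
split=> [[c ->] mm|h].
  rewrite mcoeff_msupp raddf_sum /= => hne.
  have [i hi|hnone] := pickP (fun i : 'I_(size (mgens ms)) => (c i * (mgens ms)`_i)@_mm != 0).
    have hi' : (i < size ms)%N by rewrite -(size_map (fun m => 'X_[m] : {mpoly R[n]})).
    exists (nth 0%MM ms i); first exact: mem_nth.
    by move: hi; rewrite (nth_map 0%MM) //; apply: contraNT => /mcoeffMX_eq0 ->.
  by move: hne; rewrite big1 ?eqxx // => i _; apply/eqP/negbFE/hnone.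
rewrite (mpolyE y); apply: in_ideal_sum => mm hmm.
have [m hm hle] := h mm hmm.
rewrite -(submK hle) mpolyXD scalerAl; apply: in_idealMl.
by apply: in_ideal_mem; apply: map_f.
Qed.

Lemma in_mgens_mulX ms (j : 'I_n) y :
  (forall m, m \in ms -> m j = 0%N) ->
  in_ideal (mgens ms) ('X_j * y) -> in_ideal (mgens ms) y.
Proof.
move=> hj /in_mgensP hXy; apply/in_mgensP => mm hmm.
have hs : (U_(j) + mm)%MM \in msupp ('X_j * y).
  by rewrite mcoeff_msupp mulrC mcoeffMX -mcoeff_msupp.
have [m hm hle] := hXy _ hs; exists m => //.
apply/mnm_lepP => i; have := mnm_lepP hle i; rewrite mnmDE mnm1E.
case: (eqVneq j i) => [<-|_]; last by rewrite add0n.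
by rewrite hj.
Qed.

End MonomialIdeals.

Section FreeResolutions.
Variable S : comNzRingType.

Definition exact_at m r s (A : 'M[S]_(m, r)) (B : 'M[S]_(r, s)) : Prop :=
  forall u : 'rV_r, u *m B = 0 <-> exists w, w *m A = u.

Definition free_res (I : S -> Prop) (p : nat) : Prop :=
  exists (b : nat -> nat) (d0 : 'M[S]_(b 0, 1)) (d : forall i, 'M[S]_(b i.+1, b i)),
  [/\ forall y : 'rV_1, I (y ord0 ord0) <-> exists u, u *m d0 = y,
      exact_at (d 0) d0, forall i, exact_at (d i.+1) (d i)
    & forall i, (p <= i)%N -> b i = 0%N].

Lemma free_resolutionE (gs : seq S) p : free_resolution gs p <-> free_res (in_ideal gs) p.
Proof. by []. Qed.

Lemma free_res_ext (I J : S -> Prop) p : (forall y, I y <-> J y) -> free_res I p -> free_res J p.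
Proof.
move=> hIJ [b [d0 [d [coker h0 hS hlen]]]]; exists b, d0, d; split => // y.
by rewrite -coker hIJ.
Qed.

Lemma exact_at_mul0 m r s (A : 'M[S]_(m, r)) (B : 'M_(r, s)) : exact_at A B -> A *m B = 0.
Proof.
move=> hAB; apply/row_matrixP => i; rewrite row_mul row0.
by apply/hAB; exists (row i 1%:M); rewrite -row_mul mul1mx.
Qed.

Lemma mx_lift_rows r s m (M : 'M[S]_(r, m)) (E : 'M[S]_(s, m)) :
  (forall i, exists w : 'rV_s, w *m E = row i M) -> exists W, W *m E = M.
Proof.
move=> h; have [f hf] := fin_all_exists h.
by exists (\matrix_i f i); apply/row_matrixP => i; rewrite row_mul rowK hf.
Qed.

Lemma exact_at_lift m r s t (A : 'M[S]_(m, r)) (B : 'M_(r, s)) (M : 'M_(t, r)) :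
  exact_at A B -> M *m B = 0 -> exists W, W *m A = M.
Proof.
move=> hAB hMB; apply: mx_lift_rows => i; apply/hAB.
by rewrite -row_mul hMB row0.
Qed.

(* The comparison theorem of homological algebra. *)
Lemma free_res_chain_map (a c : nat -> nat) (p : 'M[S]_(a 0, 1)) (q : 'M[S]_(c 0, 1))
    (D : forall i, 'M[S]_(a i.+1, a i)) (E : forall i, 'M[S]_(c i.+1, c i)) :
  (exists W, W *m q = p) -> D 0 *m p = 0 -> (forall i, D i.+1 *m D i = 0) ->
  exact_at (E 0) q -> (forall i, exact_at (E i.+1) (E i)) ->
  exists Psi : forall i, 'M[S]_(a i, c i),
    Psi 0 *m q = p /\ forall i, Psi i.+1 *m E i = D i *m Psi i.
Proof.
move=> [Psi0 hPsi0] hDp hDD exE0 exE.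
have [Psi1 hPsi1] : exists W, W *m E 0 = D 0 *m Psi0.
  by apply: exact_at_lift exE0 _; rewrite -mulmxA hPsi0.
have step n (A : 'M[S]_(a n, c n)) (B : 'M[S]_(a n.+1, c n.+1)) :
    B *m E n = D n *m A -> exists C : 'M[S]_(a n.+2, c n.+2), C *m E n.+1 = D n.+1 *m B.
  by move=> hB; apply: exact_at_lift (exE n) _; rewrite -mulmxA hB mulmxA hDD mul0mx.
pose T n := {AB : 'M[S]_(a n, c n) * 'M[S]_(a n.+1, c n.+1) | AB.2 *m E n = D n *m AB.1}.
pose F := fix F n : T n := match n as n0 return T n0 with
  | 0 => exist _ (Psi0, Psi1) hPsi1
  | n'.+1 => let AB := F n' in
     let C := constructive_indefinite_description _ (step n' _ _ (svalP AB)) in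
     exist _ ((sval AB).2, sval C) (svalP C)
  end.
by exists (fun n => (sval (F n)).1); split=> // i; apply: (svalP (F i)).
Qed.

End FreeResolutions.

Section MappingCone.
Variable S : idomainType.
Variables (a c : nat -> nat) (p : 'M[S]_(a 0, 1)) (q : 'M[S]_(c 0, 1)).
Variables (D : forall i, 'M[S]_(a i.+1, a i)) (E : forall i, 'M[S]_(c i.+1, c i)).
Variables (Psi : forall i, 'M[S]_(a i, c i)) (x : S).
Hypothesis Psi0q : Psi 0 *m q = p.
Hypothesis PsiS : forall i, Psi i.+1 *m E i = D i *m Psi i.
Hypothesis exD0 : exact_at (D 0) p.
Hypothesis exD : forall i, exact_at (D i.+1) (D i).
Hypothesis exE0 : exact_at (E 0) q.
Hypothesis exE : forall i, exact_at (E i.+1) (E i).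
Hypothesis x_neq0 : x != 0.
Hypothesis x_regular : forall y : 'rV[S]_1,
  (exists u, u *m p = x *: y) -> exists u, u *m p = y.

Definition cone_sign (n : nat) : S := (-1) ^+ n.

Definition cone_rank (n : nat) : nat :=
  if n is n'.+1 then (a n'.+1 + c n'.+1 + a n')%N else (a 0 + c 0)%N.

Definition cone_aug : 'M[S]_(cone_rank 0, 1) := col_mx p (x *: q).

Definition cone_diff (i : nat) : 'M[S]_(cone_rank i.+1, cone_rank i) :=
  match i as i0 return 'M[S]_(cone_rank i0.+1, cone_rank i0) with
  | 0 => col_mx (col_mx (row_mx (D 0) 0) (row_mx 0 (E 0)))
                (row_mx (x *: 1%:M) (- Psi 0))
  | n.+1 => col_mx (col_mx (row_mx (row_mx (D n.+1) 0) 0)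
                           (row_mx (row_mx 0 (E n.+1)) 0))
                   (row_mx (row_mx ((cone_sign n.+1 * x) *: 1%:M)
                                   (- (cone_sign n.+1 *: Psi n.+1))) (D n))
  end.

Lemma cone_signS n : cone_sign n.+1 = - cone_sign n.
Proof. by rewrite /cone_sign exprS mulN1r. Qed.

Lemma cone_augE (al : 'rV_(a 0)) (be : 'rV_(c 0)) :
  row_mx al be *m cone_aug = al *m p + x *: (be *m q).
Proof. by rewrite /cone_aug mul_row_col scalemxAr. Qed.

Lemma cone_diff0E (al : 'rV_(a 1)) (be : 'rV_(c 1)) (ga : 'rV_(a 0)) :
  row_mx (row_mx al be) ga *m cone_diff 0 =
  row_mx (al *m D 0 + x *: ga) (be *m E 0 - ga *m Psi 0).
Proof.
rewrite /= !mul_row_col !mul_mx_row !mulmx0 add_row_mx addr0 add0r add_row_mx.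
by rewrite -scalemxAr mulmx1 mulmxN.
Qed.

Lemma cone_diffSE n (al : 'rV_(a n.+2)) (be : 'rV_(c n.+2)) (ga : 'rV_(a n.+1)) :
  row_mx (row_mx al be) ga *m cone_diff n.+1 =
  row_mx (row_mx (al *m D n.+1 + (cone_sign n.+1 * x) *: ga)
                 (be *m E n.+1 - cone_sign n.+1 *: (ga *m Psi n.+1))) (ga *m D n).
Proof.
rewrite /= !mul_row_col !mul_mx_row !mulmx0 !add_row_mx !addr0 !add0r.
by rewrite -scalemxAr mulmx1 mulmxN scalemxAr.
Qed.

Let D0p (w : 'rV_(a 1)) : w *m D 0 *m p = 0.
Proof. by apply/exD0; exists w. Qed.
Let DSD i (w : 'rV_(a i.+2)) : w *m D i.+1 *m D i = 0.
Proof. by apply/exD; exists w. Qed.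
Let E0q (w : 'rV_(c 1)) : w *m E 0 *m q = 0.
Proof. by apply/exE0; exists w. Qed.
Let ESE i (w : 'rV_(c i.+2)) : w *m E i.+1 *m E i = 0.
Proof. by apply/exE; exists w. Qed.

Lemma cone_exact0 : exact_at (cone_diff 0) cone_aug.
Proof.
move=> u; rewrite -(hsubmxK u); move: (lsubmx u) (rsubmx u) => al be; rewrite cone_augE; split.
  move=> e0.
  have [ga0 hga0] : exists u, u *m p = be *m q.
    apply: x_regular; exists (- al); rewrite mulNmx; apply/eqP.
    by rewrite eq_sym -addr_eq0 addrC e0.
  have [be' hbe'] : exists w, w *m E 0 = be - ga0 *m Psi 0.
    by apply/exE0; rewrite mulmxBl -mulmxA Psi0q hga0 subrr.
  have [al' hal'] : exists w, w *m D 0 = al + x *: ga0.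
    by apply/exD0; rewrite mulmxDl -scalemxAl hga0.
  exists (row_mx (row_mx al' be') (- ga0)); rewrite cone_diff0E hal' hbe' mulNmx.
  by rewrite scalerN addrK opprK subrK.
case=> w hw; rewrite -cone_augE -hw -(hsubmxK w) -(hsubmxK (lsubmx w)); clear al be hw.
move: (lsubmx (lsubmx w)) (rsubmx (lsubmx w)) (rsubmx w) => al be ga.
rewrite cone_diff0E cone_augE mulmxDl mulmxBl D0p E0q -!scalemxAl -mulmxA Psi0q.
by rewrite add0r sub0r scalerN addrN.
Qed.

Lemma cone_exact1 : exact_at (cone_diff 1) (cone_diff 0).
Proof.
move=> u; rewrite -(hsubmxK u) -(hsubmxK (lsubmx u)).
move: (lsubmx (lsubmx u)) (rsubmx (lsubmx u)) (rsubmx u) => al be ga.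
rewrite cone_diff0E; split.
  move/eqP; rewrite -row_mx0 => /eqP /eq_row_mx [e1 e2].
  have gp : ga *m p = 0.
    have : x *: (ga *m p) = 0.
      rewrite scalemxAl; have -> : x *: ga = - (al *m D 0).
        by apply/eqP; rewrite -addr_eq0 addrC e1.
      by rewrite mulNmx D0p oppr0.
    by move/eqP; rewrite scalemx_eq0 (negbTE x_neq0) => /eqP.
  have [ga' hga'] := (exD0 ga).1 gp.
  have [al' hal'] : exists w, w *m D 1 = al + x *: ga'.
    by apply/exD; rewrite mulmxDl -scalemxAl hga' e1.
  have [be' hbe'] : exists w, w *m E 1 = be - ga' *m Psi 1.
    apply/exE; rewrite mulmxBl -mulmxA PsiS mulmxA hga'.
    by apply/eqP; rewrite subr_eq0 -subr_eq0 e2.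
  exists (row_mx (row_mx al' be') ga'); rewrite cone_diffSE hal' hbe' hga' /cone_sign expr1.
  by rewrite mulN1r scaleNr addrK scaleN1r opprK subrK.
case=> w hw; rewrite -cone_diff0E -hw -(hsubmxK w) -(hsubmxK (lsubmx w)); clear al be ga hw.
move: (lsubmx (lsubmx w)) (rsubmx (lsubmx w)) (rsubmx w) => al' be' ga'.
rewrite cone_diffSE cone_diff0E mulmxDl DSD add0r -scalemxAl /cone_sign expr1 mulN1r.
rewrite scaleNr addNr mulmxBl ESE sub0r -scalemxAl -[ga' *m Psi 1 *m E 0]mulmxA PsiS.
by rewrite mulmxA scaleN1r opprK subrr row_mx0.
Qed.

Lemma cone_exactSS n : exact_at (cone_diff n.+2) (cone_diff n.+1).
Proof.
move=> u; rewrite -(hsubmxK u) -(hsubmxK (lsubmx u)).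
move: (lsubmx (lsubmx u)) (rsubmx (lsubmx u)) (rsubmx u) => al be ga.
rewrite cone_diffSE; split.
  move/eqP; rewrite -row_mx0 => /eqP /eq_row_mx [/eqP]; rewrite -row_mx0.
  move=> /eqP /eq_row_mx [e1 e2] e3.
  have [ga' hga'] := (exD ga).1 e3.
  have [al' hal'] : exists w, w *m D n.+2 = al + (cone_sign n.+1 * x) *: ga'.
    by apply/exD; rewrite mulmxDl -scalemxAl hga' e1.
  have [be' hbe'] : exists w, w *m E n.+2 = be - cone_sign n.+1 *: (ga' *m Psi n.+2).
    by apply/exE; rewrite mulmxBl -scalemxAl -mulmxA PsiS mulmxA hga'.
  exists (row_mx (row_mx al' be') ga'); rewrite cone_diffSE hal' hbe' hga' (cone_signS n.+1).
  by rewrite mulNr scaleNr addrK scaleNr opprK subrK.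
case=> w hw; rewrite -cone_diffSE -hw -(hsubmxK w) -(hsubmxK (lsubmx w)); clear al be ga hw.
move: (lsubmx (lsubmx w)) (rsubmx (lsubmx w)) (rsubmx w) => al' be' ga'.
rewrite !cone_diffSE (cone_signS n.+1) mulmxDl DSD add0r -scalemxAl mulmxBl ESE sub0r.
rewrite mulNr scaleNr addNr DSD -scalemxAl -[ga' *m Psi n.+2 *m E n.+1]mulmxA PsiS.
by rewrite mulmxA scaleNr opprK subrr !row_mx0.
Qed.

Lemma cone_exact i : exact_at (cone_diff i.+1) (cone_diff i).
Proof. by case: i => [|n]; [apply: cone_exact1 | apply: cone_exactSS]. Qed.

Lemma cone_coker (IP IQ IH : S -> Prop) :
  (forall y : 'rV_1, IP (y ord0 ord0) <-> exists u, u *m p = y) ->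
  (forall y : 'rV_1, IQ (y ord0 ord0) <-> exists u, u *m q = y) ->
  (forall y, IH y <-> exists a b, [/\ IP a, IQ b & y = a + x * b]) ->
  forall y : 'rV_1, IH (y ord0 ord0) <-> exists u, u *m cone_aug = y.
Proof.
move=> cP cQ cH y; rewrite cH; split.
  case=> a0 [b0 [ha hb e]].
  have [al hal] : exists u, u *m p = a0%:M by apply/cP; rewrite mxE eqxx.
  have [be hbe] : exists u, u *m q = b0%:M by apply/cQ; rewrite mxE eqxx.
  exists (row_mx al be); rewrite cone_augE hal hbe scale_scalar_mx.
  by rewrite -(raddfD (@scalar_mx _ 1)) -e [RHS]mx11_scalar.
case=> u <-; rewrite -(hsubmxK u); move: (lsubmx u) (rsubmx u) => al be.
exists ((al *m p) ord0 ord0), ((be *m q) ord0 ord0); split.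
- by apply/cP; exists al.
- by apply/cQ; exists be.
- by rewrite cone_augE !mxE.
Qed.

End MappingCone.

(* The mapping cone of a lift of the inclusion [IP <= IQ] to the resolutions resolves [IP + x IQ]. *)
Theorem free_res_cone (S : idomainType) (IP IQ IH : S -> Prop) (x : S) pP pQ :
  x != 0 -> (forall y, IP y -> IQ y) -> (forall y, IP (x * y) -> IP y) ->
  (forall y, IH y <-> exists a b, [/\ IP a, IQ b & y = a + x * b]) ->
  free_res IP pP -> free_res IQ pQ -> free_res IH (maxn pP.+1 pQ).
Proof.
move=> x_neq0 hPQ x_reg hH [a [p [D [cP exD0 exD lenP]]]] [c [q [E [cQ exE0 exE lenQ]]]].
have [Psi [Psi0q PsiS]] : exists Psi : forall i, 'M[S]_(a i, c i),
    Psi 0 *m q = p /\ forall i, Psi i.+1 *m E i = D i *m Psi i.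
  apply: free_res_chain_map => //; last 2 first.
  - exact: exact_at_mul0.
  - by move=> i; apply: exact_at_mul0.
  apply: mx_lift_rows => i; apply/cQ/hPQ/cP.
  by exists (row i 1%:M); rewrite -row_mul mul1mx.
have x_regular (y : 'rV[S]_1) : (exists u, u *m p = x *: y) -> exists u, u *m p = y.
  by move/cP; rewrite mxE => /x_reg /cP.
exists (cone_rank a c), (cone_aug p q x), (cone_diff D E Psi x); split.
- exact: cone_coker.
- exact: cone_exact0.
- exact: cone_exact.
case=> [|n]; rewrite geq_max => /andP [hP hQ] //=.
by rewrite lenP 1?lenQ 1?lenP //; apply: ltnW.
Qed.

Lemma free_res0 (S : comNzRingType) : free_res (fun y : S => y = 0) 0.
Proof.
exists (fun _ => 0%N), 0, (fun _ => 0); split => //.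
- move=> y; split=> [hy|[u <-]]; last by rewrite mulmx0 mxE.
  by exists 0; rewrite mul0mx; apply/matrixP => i j; rewrite !ord1 mxE hy.
- by move=> u; split => _; [exists 0; apply/matrixP => ? [] | rewrite mulmx0].
- by move=> i u; split => _; [exists 0; apply/matrixP => ? [] | rewrite mulmx0].
Qed.

Lemma free_res_unit (S : comNzRingType) : free_res (fun _ : S => True) 1.
Proof.
exists (fun i => if i is 0 then 1%N else 0%N), 1%:M, (fun _ => 0); split => //.
- by move=> y; split => // _; exists y; rewrite mulmx1.
- move=> u; rewrite mulmx1; split=> [->|[w <-]]; last by rewrite mulmx0.
  by exists 0; rewrite mul0mx.
- by move=> i u; split => _; [exists 0; apply/matrixP => ? [] | rewrite mulmx0].
- by case.
Qed.

Lemma free_res_rcons_regular (S : idomainType) (gs : seq S) (g : S) p :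
  g != 0 -> (forall y, in_ideal gs (g * y) -> in_ideal gs y) ->
  free_res (in_ideal gs) p -> free_res (in_ideal (rcons gs g)) p.+1.
Proof.
move=> g_neq0 g_reg hP.
have := free_res_cone g_neq0 (fun y _ => I) g_reg _ hP (free_res_unit S).
rewrite (maxn_idPl _) //; apply => y; rewrite in_ideal_rcons.
by split=> [[a [b [ha ->]]]|[a [b [ha _ ->]]]]; exists a, b.
Qed.

Lemma free_res_mgens_cat_vars (n : nat) (R : idomainType) (ms : seq 'X_{1..n}) (js : seq 'I_n) p :
  uniq js -> (forall m j, m \in ms -> j \in js -> m j = 0%N) ->
  free_res (in_ideal (mgens R ms)) p ->
  free_res (in_ideal (mgens R (ms ++ [seq U_(j)%MM | j <- js]))) (p + size js).
Proof.
elim: js ms p => [|j js IH] ms p; first by rewrite cats0 addn0.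
move=> /= /andP [j_notin uniq_js] ms_js hP.
rewrite -cat_rcons addnS -addSn; apply: IH => //.
  move=> m i; rewrite mem_rcons inE => /orP [/eqP -> | hm] hi; last first.
    by apply: ms_js hm _; rewrite inE hi orbT.
  by rewrite mnm1E; apply/eqP; rewrite eqb0; apply: contraNneq j_notin => ->.
rewrite /mgens map_rcons; apply: free_res_rcons_regular => //.
- exact: mpolyX_neq0.
- by move=> y; apply: in_mgens_mulX => m hm; apply: ms_js hm (mem_head _ _).
Qed.

Section Graphs.
Local Open Scope fset_scope.
Implicit Types (G H : graph) (A : {fset nat}) (e : {fset nat}) (u v w x : nat).

Definition nbr H v : {fset nat} := [fset u in gV H | adj H u v].

Lemma card_edge G e : e \in gE G -> #|` e| = 2.
Proof. by move=> he; have /allP /(_ e he) /andP [/eqP] := gwf G. Qed.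

Lemma edge_sub G e : e \in gE G -> e `<=` gV G.
Proof. by move=> he; have /allP /(_ e he) /andP [] := gwf G. Qed.

Lemma edge_vertex G e u : e \in gE G -> u \in e -> u \in gV G.
Proof. by move=> /edge_sub /fsubsetP; apply. Qed.

Lemma graph_eq G1 G2 : gV G1 = gV G2 -> gE G1 = gE G2 -> G1 = G2.
Proof.
case: G1 G2 => V1 E1 wf1 [V2 E2 wf2] /= eV eE; subst.
by rewrite (bool_irrelevance wf1 wf2).
Qed.

Lemma gV_induced G A u : (u \in gV (induced G A)) = (u \in gV G) && (u \in A).
Proof. by rewrite /= inE. Qed.

Lemma gE_induced G A e : (e \in gE (induced G A)) = (e \in gE G) && (e `<=` A).
Proof. by rewrite /= inE. Qed.

Lemma gV_induced_sub G A : gV (induced G A) `<=` gV G.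
Proof. by apply/fsubsetP => u; rewrite gV_induced => /andP []. Qed.

Lemma induced_id G A : gV G `<=` A -> induced G A = G.
Proof.
move=> hA; apply: graph_eq; apply/fsetP => y; rewrite ?gV_induced ?gE_induced.
  by case hy: (y \in gV G) => //=; apply: (fsubsetP hA).
by case hy: (y \in gE G) => //=; apply: fsubset_trans hA; apply: edge_sub.
Qed.

Lemma gV_delv H v u : (u \in gV (delv H v)) = (u != v) && (u \in gV H).
Proof. by rewrite /delv gV_induced !inE; case: (u \in gV H); rewrite ?andbT ?andbF. Qed.

Lemma gE_delv H v e : (e \in gE (delv H v)) = (e \in gE H) && (v \notin e).
Proof.
rewrite /delv gE_induced; case he: (e \in gE H) => //=.
apply/fsubsetP/idP => [h|hv u hu]; first by apply/negP => /h; rewrite !inE eqxx.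
by rewrite !inE (edge_vertex he hu) andbT; apply: contraNneq hv => <-.
Qed.

Lemma induced_delv G A x : x \notin A -> induced G A = induced (delv G x) A.
Proof.
move=> hxA; apply: graph_eq; apply/fsetP => y.
  rewrite [LHS]gV_induced [RHS]gV_induced gV_delv; case: (eqVneq y x) => [->|] //=.
  by rewrite (negbTE hxA) !andbF.
rewrite [LHS]gE_induced [RHS]gE_induced gE_delv -andbA; case: (y \in gE G) => //=.
case: (boolP (y `<=` A)) => [/fsubsetP hyA|]; rewrite ?andbF // andbT.
by apply/esym/negP => /hyA; apply/negP.
Qed.

Lemma hereditary_induced (C : graph -> Prop) G A : hereditary C -> C G -> C (induced G A).
Proof.
move=> hC; move: {2}#|` gV G `\` A| (leqnn #|` gV G `\` A|) => n.
elim: n G => [|n IH] G hn hG.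
  by rewrite induced_id // -fsetD_eq0 -cardfs_eq0 -leqn0.
have [hA|/fsubsetPn [x hxV hxA]] := boolP (gV G `<=` A); first by rewrite induced_id.
rewrite (induced_delv _ hxA); apply: IH; last exact: hC.
rewrite -ltnS; apply: leq_trans hn; rewrite (cardfsD1 x (gV G `\` A)) in_fsetD hxA hxV.
rewrite add1n ltnS; apply: fsubset_leq_card.
by apply/fsubsetP => y; rewrite in_fsetD gV_delv !inE => /andP [-> /andP [-> ->]].
Qed.

Lemma card_delv H v : v \in gV H -> (#|` gV (delv H v)|).+1 = #|` gV H|.
Proof.
move=> hv; rewrite [RHS](cardfsD1 v) hv add1n; congr _.+1; congr #|` _|.
by apply/fsetP => u; rewrite gV_delv !inE.
Qed.

Lemma delseq_cons G x s : delseq G (x :: s) = delseq (delv G x) s.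
Proof. by []. Qed.

Lemma gV_delseq G s u : (u \in gV (delseq G s)) = (u \notin s) && (u \in gV G).
Proof.
elim: s G => [|x s IH] G //.
by rewrite delseq_cons IH gV_delv inE negb_or andbCA andbA.
Qed.

Lemma card_delseq G s : uniq s -> all (fun v => v \in gV G) s ->
  (#|` gV (delseq G s)| + size s)%N = #|` gV G|.
Proof.
elim: s G => [|x s IH] G; first by rewrite addn0.
move=> /andP [hx hu] /andP [hxV hs]; rewrite delseq_cons /= addnS IH ?card_delv //.
apply/allP => y hy; rewrite gV_delv (allP hs y hy) andbT.
by apply: contraNneq hx => <-.
Qed.

Lemma hereditary_delseq (C : graph -> Prop) G s : hereditary C -> C G -> C (delseq G s).
Proof.
move=> hC; elim: s G => [|x s IH] G hG //; rewrite delseq_cons; apply: IH.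
exact: hereditary_induced.
Qed.

Lemma adj_neq H u v : adj H u v -> u != v.
Proof. by move=> /card_edge; apply: contra_eqN => /eqP ->; rewrite fsetUid cardfs1. Qed.

Lemma mem_nbr H v u : (u \in nbr H v) = (u \in gV H) && adj H u v.
Proof. by rewrite !inE. Qed.

Lemma nbr_edge H v u : u \in nbr H v -> [fset v; u] \in gE H.
Proof. by rewrite mem_nbr => /andP [_]; rewrite /adj fsetUC. Qed.

Lemma edge_nbr H v e : e \in gE H -> v \in e -> exists2 u, u \in nbr H v & e = [fset v; u].
Proof.
move=> he hv; have : #|` e `\ v| == 1.
  by move: (card_edge he); rewrite (cardfsD1 v) hv add1n => -[->].
case/cardfs1P => u hu; have eE : e = [fset v; u] by rewrite -hu fsetD1K.
have /fsetD1P [_ hue] : u \in e `\ v by rewrite hu inE.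
by exists u => //; rewrite mem_nbr (edge_vertex he hue) /adj fsetUC -eE.
Qed.

Lemma gV_delst H v u : (u \in gV (delst H v)) = [&& u != v, u \notin nbr H v & u \in gV H].
Proof.
rewrite /delst gV_induced /stset !inE.
by case: (u \in gV H); rewrite ?andbF //= !andbT negb_or.
Qed.

Lemma gE_delst H v e : (e \in gE (delst H v)) =
  (e \in gE H) && [forall y : e, (val y != v) && (val y \notin nbr H v)].
Proof.
rewrite /delst gE_induced; case he: (e \in gE H) => //=.
apply/fsubsetP/forallP => [h y|h y hy].
  by have := h _ (fsvalP y); rewrite /stset !inE negb_or => /andP [/andP [-> ->] _].
have /andP [h1 h2] := h (FSetSub hy); rewrite /stset in_fsetD in_fsetU in_fset1 negb_or.
by rewrite h1 h2 (edge_vertex he hy).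
Qed.

Lemma card_delst H v : v \in gV H ->
  (#|` gV (delst H v)| + #|` nbr H v| + 1)%N = #|` gV H|.
Proof.
move=> hv; have -> : gV (delst H v) = gV H `\` (v |` nbr H v).
  by apply/fsetP => u; rewrite gV_delst !inE negb_or andbA.
have hs : v |` nbr H v `<=` gV H.
  by apply/fsubsetP => u; rewrite !inE => /orP [/eqP -> | /andP []].
have hn : v \notin nbr H v by apply/negP => /nbr_edge /adj_neq; rewrite eqxx.
rewrite cardfsDS // cardfsU1 hn; move: (fsubset_leq_card hs); rewrite cardfsU1 hn /=.
lia.
Qed.

Lemma gE_ovl H : gE (ovl H) = gE H.
Proof.
apply/fsetP => e; rewrite /ovl gE_induced; case he: (e \in gE H) => //=.
apply/fsubsetP => u hu; rewrite !inE (edge_vertex he hu) andbT andTb negbK.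
by apply/hasP; exists e.
Qed.

Lemma card_ovl H : (#|` gV (ovl H)| + #|` isol H|)%N = #|` gV H|.
Proof.
have hs : isol H `<=` gV H by apply/fsubsetP => u; rewrite !inE => /andP [].
have -> : gV (ovl H) = gV H `\` isol H.
  apply/fsetP => u; rewrite /ovl gV_induced in_fsetD.
  by case: (u \in gV H); rewrite ?andbT ?andbF.
by rewrite cardfsDS ?subnK // fsubset_leq_card.
Qed.

End Graphs.

Section EdgeIdeals.
Local Open Scope fset_scope.
Local Open Scope ring_scope.
Variables (k : fieldType) (G0 : graph).
Local Notation n := (nvars G0).
Local Notation x := (xv k G0).
Implicit Types (H : graph) (e : {fset nat}) (u v w : nat).

Definition edge_gens_in H : seq {mpoly k[n]} :=
  [seq \prod_(u <- enum_fset e) x u | e <- enum_fset (gE H)].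

Definition nbr_vars H v : seq {mpoly k[n]} := [seq x u | u <- enum_fset (nbr H v)].

Lemma edge_gens_inE : edge_gens k G0 = edge_gens_in G0.
Proof. by []. Qed.

Lemma prod_edge_pair v u : u != v -> \prod_(w <- enum_fset [fset v; u]) x w = x v * x u.
Proof. by move=> huv; rewrite big_fsetU1 ?inE 1?eq_sym //= big_seq_fset1. Qed.

Lemma prod_edge_nbr H v e : e \in gE H -> v \in e ->
  exists2 u, u \in nbr H v & \prod_(w <- enum_fset e) x w = x v * x u.
Proof.
move=> he hv; have [u hu ->] := edge_nbr he hv; exists u => //.
by apply: prod_edge_pair; move: hu; rewrite mem_nbr => /andP [_ /adj_neq].
Qed.

Lemma edge_gens_in_mem H e : e \in gE H -> \prod_(u <- enum_fset e) x u \in edge_gens_in H.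
Proof. exact: map_f. Qed.

Lemma nbr_vars_mem H v u : u \in nbr H v -> x u \in nbr_vars H v.
Proof. exact: map_f. Qed.

Lemma in_edge_idealP H v y :
  in_ideal (edge_gens_in H) y <->
  exists a b, [/\ in_ideal (edge_gens_in (delv H v)) a,
                  in_ideal (edge_gens_in (delv H v) ++ nbr_vars H v) b & y = a + x v * b].
Proof.
have sub_delv g : g \in edge_gens_in (delv H v) -> in_ideal (edge_gens_in H) g.
  move=> /mapP [e he ->]; apply/in_ideal_mem/edge_gens_in_mem.
  by move: he; rewrite gE_delv => /andP [].
split=> [|[a [b [ha hb ->]]]]; last first.
  apply: in_idealD; first exact: in_ideal_subset ha.
  apply: (in_ideal_mulr_subset _ hb) => g; rewrite mem_cat => /orP [/sub_delv|].
    exact: in_idealMl.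
  move=> /mapP [u hu ->]; apply/in_ideal_mem; rewrite -prod_edge_pair.
    exact/edge_gens_in_mem/nbr_edge.
  by move: hu; rewrite mem_nbr => /andP [_ /adj_neq].
move: y; apply: in_ideal_ind => [|y1 y2|c y|g].
- by exists 0, 0; split; rewrite ?mulr0 ?addr0 //; apply: in_ideal0.
- move=> [a1 [b1 [ha1 hb1 ->]]] [a2 [b2 [ha2 hb2 ->]]].
  exists (a1 + a2), (b1 + b2); split; try exact: in_idealD.
  by rewrite mulrDr addrACA.
- move=> [a [b [ha hb ->]]].
  exists (c * a), (c * b); split; try exact: in_idealMl.
  by rewrite mulrDr mulrCA.
move=> /mapP [e he ->]; have [hv|hv] := boolP (v \in e).
  have [u hu ->] := prod_edge_nbr he hv; exists 0, (x u); split; rewrite ?add0r //.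
    exact: in_ideal0.
  by apply/in_ideal_mem; rewrite mem_cat nbr_vars_mem ?orbT.
exists (\prod_(u <- enum_fset e) x u), 0; split; rewrite ?mulr0 ?addr0 //; last exact: in_ideal0.
by apply/in_ideal_mem/edge_gens_in_mem; rewrite gE_delv he.
Qed.

Lemma in_edge_ideal_delv_delst H v y :
  in_ideal (edge_gens_in (delv H v) ++ nbr_vars H v) y <->
  in_ideal (edge_gens_in (delst H v) ++ nbr_vars H v) y.
Proof.
have nbr_in (ss : seq {mpoly k[n]}) g : g \in nbr_vars H v -> in_ideal (ss ++ nbr_vars H v) g.
  by move=> hg; apply: in_ideal_mem; rewrite mem_cat hg orbT.
split; apply: in_ideal_subset => g; rewrite mem_cat => /orP [|/nbr_in] //;
  move=> /mapP [e he ->].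
  have [hst|] := boolP (e \in gE (delst H v)).
    by apply/in_ideal_mem; rewrite mem_cat edge_gens_in_mem.
  move: he; rewrite gE_delv gE_delst => /andP [he hv]; rewrite he /=.
  move=> /forallPn [w]; rewrite negb_and !negbK => /orP [/eqP hw|hw].
    by move: hv; rewrite -hw (fsvalP w).
  have [u _ ->] := prod_edge_nbr he (fsvalP w).
  exact/in_idealMr/nbr_in/nbr_vars_mem.
apply/in_ideal_mem; rewrite mem_cat edge_gens_in_mem //.
move: he; rewrite gE_delst gE_delv => /andP [-> /forallP hw] /=.
by apply/negP => hv; have := hw (FSetSub hv); rewrite eqxx.
Qed.

(* [None] exactly off [gV G0], where [xv] takes the junk value [0]. *)
Definition vord u : option 'I_n := insub (index u (enum_fset (gV G0))).

Definition vertex_of (j : 'I_n) : nat := nth 0%N (enum_fset (gV G0)) j.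

Lemma vordK : ocancel vord vertex_of.
Proof.
move=> u; rewrite /vord /vertex_of; case: insubP => //= j.
by rewrite index_mem => hu ->; apply: nth_index.
Qed.

Lemma vord_inj u w j : vord u = Some j -> vord w = Some j -> u = w.
Proof. by move=> hu hw; rewrite -(vordK u) -(vordK w) hu hw. Qed.

Lemma vordP u : u \in gV G0 -> exists j, vord u = Some j.
Proof. by move=> hu; rewrite /vord insubT ?index_mem //; eexists. Qed.

Lemma xv_vord u j : vord u = Some j -> x u = 'X_j.
Proof. by rewrite /xv /var -/(vord u) => ->. Qed.

Definition vmono u : 'X_{1..n} := if vord u is Some j then U_(j)%MM else 0%MM.

Definition emono e : 'X_{1..n} := (\sum_(u <- enum_fset e) vmono u)%MM.

Lemma prod_xv_emono e : e `<=` gV G0 -> \prod_(u <- enum_fset e) x u = 'X_[emono e].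
Proof.
move=> /fsubsetP he; rewrite /emono (big_morph (fun m => 'X_[m] : {mpoly k[n]}) (mpolyXD _) (mpolyX0 _ _)).
rewrite big_seq [RHS]big_seq; apply: eq_bigr => u /he /vordP [j hj].
by rewrite /vmono hj (xv_vord hj).
Qed.

Lemma emono_eq0 e j : (forall u, u \in e -> vord u != Some j) -> emono e j = 0%N.
Proof.
move=> he; rewrite /emono mnm_sumE big_seq big1 // => u /he.
rewrite /vmono; case: (vord u) => [i|_]; last by rewrite mnm0E.
by move=> hij; rewrite mnm1E; case: (eqVneq i j) hij => // ->; rewrite eqxx.
Qed.

Lemma edge_gens_in_mgens H :
  gV H `<=` gV G0 -> edge_gens_in H = mgens k [seq emono e | e <- enum_fset (gE H)].
Proof.
move=> hH; rewrite /mgens -map_comp; apply/eq_in_map => e he /=.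
by apply: prod_xv_emono; apply: fsubset_trans hH; apply: edge_sub.
Qed.

Lemma map_xv_pmap (us : seq nat) : all (mem (gV G0)) us ->
  [seq x u | u <- us] = mgens k [seq U_(j)%MM | j <- pmap vord us].
Proof.
elim: us => //= u us IH /andP [/vordP [j hj] hus].
by rewrite hj /= IH // (xv_vord hj).
Qed.

Lemma in_edge_ideal_mulx H v y : gV H `<=` gV G0 -> v \in gV G0 ->
  (forall e, e \in gE H -> v \notin e) ->
  in_ideal (edge_gens_in H) (x v * y) -> in_ideal (edge_gens_in H) y.
Proof.
move=> hH hv hvE; have [j hj] := vordP hv; rewrite edge_gens_in_mgens // (xv_vord hj).
apply: in_mgens_mulX => m /mapP [e he ->]; apply: emono_eq0 => u hu.
by apply: contraNneq (hvE e he) => huj; rewrite -(vord_inj huj hj).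
Qed.

Lemma free_res_nbr_vars H v p : gV H `<=` gV G0 ->
  free_res (in_ideal (edge_gens_in (delst H v))) p ->
  free_res (in_ideal (edge_gens_in (delst H v) ++ nbr_vars H v)) (p + #|` nbr H v|).
Proof.
move=> hH; have hnbr : all (mem (gV G0)) (enum_fset (nbr H v)).
  by apply/allP => u; rewrite mem_nbr => /andP [/(fsubsetP hH)].
rewrite edge_gens_in_mgens; last exact: fsubset_trans (gV_induced_sub _ _) hH.
rewrite /nbr_vars map_xv_pmap // -map_cat.
have -> : #|` nbr H v| = size (pmap vord (enum_fset (nbr H v))).
  rewrite size_pmap -[LHS](count_predT (enum_fset (nbr H v))).
  by apply: eq_in_count => u /(allP hnbr) /vordP [j ->].
apply: free_res_mgens_cat_vars; first by apply: (pmap_uniq vordK); apply: fset_uniq.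
move=> m j /mapP [e he ->]; rewrite mem_pmap => /mapP [u hu huj].
apply: emono_eq0 => w hw; apply/eqP => hwj; move: he; rewrite gE_delst => /andP [_].
move=> /forallP /(_ (FSetSub hw)) /=; rewrite (vord_inj hwj (esym huj)) hu.
by rewrite andbF.
Qed.

Lemma free_res_edge_ideal H v p1 p2 : gV H `<=` gV G0 -> v \in gV H ->
  free_res (in_ideal (edge_gens_in (delv H v))) p1 ->
  free_res (in_ideal (edge_gens_in (delst H v))) p2 ->
  free_res (in_ideal (edge_gens_in H)) (maxn p1.+1 (p2 + #|` nbr H v|)).
Proof.
move=> hH hv hP /(free_res_nbr_vars hH) hQ.
have hv0 : v \in gV G0 := fsubsetP hH v hv.
have [j hj] := vordP hv0.
apply: (free_res_cone (x := x v) _ _ _ _ hP hQ).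
- by rewrite (xv_vord hj) mpolyX_neq0.
- move=> y hy; apply: (in_edge_ideal_delv_delst H v y).1.
  apply: (in_ideal_subset _ hy) => g hg.
  by apply: in_ideal_mem; rewrite mem_cat hg.
- move=> y; apply: in_edge_ideal_mulx => //; first exact: fsubset_trans (gV_induced_sub _ _) hH.
  by move=> e; rewrite gE_delv => /andP [].
move=> y; rewrite (in_edge_idealP _ v).
split=> -[a [b [ha hb ->]]]; exists a, b; split=> //.
  exact: (in_edge_ideal_delv_delst H v b).1.
exact: (in_edge_ideal_delv_delst H v b).2.
Qed.
End EdgeIdeals.

Section Bound.
Local Open Scope fset_scope.
Local Open Scope R_scope.
Variables (k : fieldType) (C : graph -> Prop) (f : graph -> R) (G0 : graph).
Hypothesis C_hereditary : hereditary C.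
Hypothesis f_edgeless : forall G, C G -> gE G = fset0 -> Rle (f G) (INR #|` gV G|).
Hypothesis f_deletions : forall G, C G -> gE G != fset0 ->
  exists vs : seq nat,
    [/\ vs != [::], uniq vs, all (fun v => v \in gV G) vs,
        (forall i, (i < size vs)%N ->
           Rge (Rplus (f (delst (delseq G (take i vs)) (nth 0%N vs i))) 1) (f G))
      & Rge (Rplus (f (ovl (delseq G vs))) (INR #|` isol (delseq G vs)|)) (f G)].
Implicit Types (G H : graph) (r : R).

Definition pd_in_le H r :=
  exists p, free_res (in_ideal (edge_gens_in k G0 H)) p /\ Rle (INR p) r.

Definition pd_bound H := pd_in_le H (INR #|` gV H| - f H).

Lemma pd_in_le_weaken H r r' : Rle r r' -> pd_in_le H r -> pd_in_le H r'.
Proof. by move=> hr [p [hp hpr]]; exists p; split=> //; lra. Qed.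

Lemma pd_bound_edgeless H : C H -> gE H = fset0 -> pd_bound H.
Proof.
move=> hCH hE; exists 0%N; split; last by have := f_edgeless hCH hE; rewrite /= /Rminus; lra.
have -> : edge_gens_in k G0 H = [::].
  by apply/eqP; rewrite -size_eq0 size_map hE.
by apply: free_res_ext (free_res0 _) => y; rewrite in_ideal_nil.
Qed.

Lemma pd_in_le_split H v r : gV H `<=` gV G0 -> v \in gV H ->
  pd_in_le (delv H v) (r - 1) -> pd_in_le (delst H v) (r - INR #|` nbr H v|) ->
  pd_in_le H r.
Proof.
move=> hH hv [p1 [hp1 hr1]] [p2 [hp2 hr2]].
exists (maxn p1.+1 (p2 + #|` nbr H v|)); split; first exact: free_res_edge_ideal.
by case: leqP => _; rewrite ?S_INR ?plus_INR; lra.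
Qed.

Lemma edge_gens_in_ovl H : edge_gens_in k G0 (ovl H) = edge_gens_in k G0 H.
Proof. by rewrite /edge_gens_in gE_ovl. Qed.

Section Deletions.
Variables (H : graph) (vs : seq nat).
Hypothesis H_sub : gV H `<=` gV G0.
Hypothesis C_H : C H.
Hypothesis IH : forall H', gV H' `<=` gV G0 -> C H' -> (#|` gV H'| < #|` gV H|)%N -> pd_bound H'.
Hypotheses (vs_neq0 : vs != [::]) (vs_uniq : uniq vs) (vs_sub : all (fun v => v \in gV H) vs).
Hypothesis f_delst : forall i, (i < size vs)%N ->
  Rge (Rplus (f (delst (delseq H (take i vs)) (nth 0%N vs i))) 1) (f H).
Hypothesis f_isol :
  Rge (Rplus (f (ovl (delseq H vs))) (INR #|` isol (delseq H vs)|)) (f H).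

Local Notation G_ i := (delseq H (take i vs)).
Local Notation v_ i := (nth 0%N vs i).

Lemma gV_delseq_sub i : gV (G_ i) `<=` gV H.
Proof. by apply/fsubsetP => u; rewrite gV_delseq => /andP []. Qed.

Lemma card_delseq_take i : (i <= size vs)%N -> (#|` gV (G_ i)| + i)%N = #|` gV H|.
Proof.
move=> hi; rewrite -{2}(size_takel hi) card_delseq ?take_uniq //.
by apply/allP => u /mem_take /(allP vs_sub).
Qed.

Lemma pd_bound_last : pd_in_le (G_ (size vs)) (INR #|` gV H| - f H - INR (size vs)).
Proof.
have hpos : (0 < size vs)%N by rewrite lt0n size_eq0.
have hcard := card_delseq_take (leqnn (size vs)).
have hsub := gV_delseq_sub (size vs).
rewrite take_size in hcard hsub *.
have [|||p [hp hpr]] := IH (H' := ovl (delseq H vs)).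
- by apply: fsubset_trans (gV_induced_sub _ _) _; apply: fsubset_trans H_sub.
- by apply: hereditary_induced => //; apply: hereditary_delseq.
- by rewrite -hcard -(card_ovl (delseq H vs)); lia.
exists p; split; first by rewrite -edge_gens_in_ovl.
move: (card_ovl (delseq H vs)) hcard => /(congr1 INR) e1 /(congr1 INR) e2.
rewrite !plus_INR in e1 e2; lra.
Qed.
Lemma mem_gV_delseq_nth i : (i < size vs)%N -> v_ i \in gV (G_ i).
Proof.
move=> hi; rewrite gV_delseq (allP vs_sub _ (mem_nth _ hi)) andbT.
have : uniq (take i vs ++ drop i vs) by rewrite cat_take_drop.
by rewrite (drop_nth 0%N hi) cat_uniq => /and3P [_ /hasPn /(_ _ (mem_head _ _))].
Qed.

Lemma pd_bound_delete_next i : (i < size vs)%N ->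
  pd_in_le (G_ i.+1) (INR #|` gV H| - f H - INR i.+1) ->
  pd_in_le (G_ i) (INR #|` gV H| - f H - INR i).
Proof.
move=> hi hnext.
have hv := mem_gV_delseq_nth hi.
have hGi : gV (G_ i) `<=` gV G0 := fsubset_trans (gV_delseq_sub i) H_sub.
have hcard_st := card_delst hv.
have hcard_i := card_delseq_take (ltnW hi).
apply: (pd_in_le_split hGi hv).
  have -> : delv (G_ i) (v_ i) = G_ i.+1 by rewrite (take_nth 0%N hi) /delseq foldl_rcons.
  apply: pd_in_le_weaken hnext.
  by rewrite S_INR; lra.
have [|||p [hp hpr]] := IH (H' := delst (G_ i) (v_ i)).
- exact: fsubset_trans (gV_induced_sub _ _) hGi.
- by apply: hereditary_induced => //; apply: hereditary_delseq.
- by rewrite -hcard_i -hcard_st; lia.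
exists p; split=> //; have := f_delst hi.
move: hcard_st hcard_i => /(congr1 INR) e1 /(congr1 INR) e2.
rewrite !plus_INR INR_1 in e1 e2; lra.
Qed.

Lemma pd_bound_deletions : pd_bound H.
Proof.
suff : forall j, (j <= size vs)%N ->
    pd_in_le (G_ (size vs - j)) (INR #|` gV H| - f H - INR (size vs - j)).
  by move=> /(_ (size vs) (leqnn _)); rewrite subnn take0 INR_0 Rminus_0_r.
elim=> [|j IHj] hj; first by rewrite subn0; apply: pd_bound_last.
have hi : (size vs - j.+1 < size vs)%N by lia.
apply: pd_bound_delete_next => //; rewrite subnSK //.
exact: IHj (ltnW hj).
Qed.
End Deletions.

Lemma pd_bound_sub H : gV H `<=` gV G0 -> C H -> pd_bound H.
Proof.
have [m hm] := ubnP #|` gV H|; elim: m H hm => // m IHm H hm hH hCH.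
have [hE|hE] := eqVneq (gE H) fset0; first exact: pd_bound_edgeless.
have [vs [vs_neq0 vs_uniq vs_sub f_delst f_isol]] := f_deletions hCH hE.
apply: (pd_bound_deletions hH hCH _ vs_neq0 vs_uniq vs_sub f_delst f_isol).
by move=> H' hH' hCH' hlt; apply: IHm => //; apply: leq_trans hlt _.
Qed.

End Bound.

Theorem theorem3p1 (k : fieldType) (C : graph -> Prop) (f : graph -> R) :
  hereditary C ->
  (* (1) *)
  (forall G : graph, C G -> gE G = fset0 ->
     Rle (f G) (INR #|` gV G|)) ->
  (forall G : graph, C G -> gE G != fset0 ->
     exists vs : seq nat,
       [/\ vs != [::], uniq vs, all (fun v => v \in gV G) vs,
           (* (2) *)
           (forall i : nat, (i < size vs)%N ->
              Rge (Rplus (f (delst (delseq G (take i vs)) (nth 0%N vs i))) 1)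
                  (f G))
         & (* (3) *)
           Rge (Rplus (f (ovl (delseq G vs))) (INR #|` isol (delseq G vs)|))
               (f G)]) ->
  forall G : graph, C G ->
    pd_le k G (Rminus (INR #|` gV G|) (f G)).
Proof.
move=> C_hereditary f_edgeless f_deletions G hG.
have [p [hp hpr]] := pd_bound_sub k C_hereditary f_edgeless f_deletions (fsubset_refl (gV G)) hG.
by exists p; split=> //; apply/free_resolutionE; rewrite edge_gens_inE.
Qed.
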